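(* Let $r\ge2$, $t\ge1$, $0<\mu<1/(3r^2)^{12}$, $0<\eta<\mu^2/3$, and let $n$ be sufficiently large. Fix an $r$-partition $Q=(V_1,\dots,V_r)$ of $[n]$ and two distinct vertices $x,y\in V_1$. Then there is a set $\mathcal P$ of $r$-partitions of $[n]\setminus\{x,y\}$ with $|\mathcal P|\le e^{\mu^{2/3}n}$ such that for every $G\in F_Q^*(n,T_{r+1}^t,\eta,\mu)$, every optimal $r$-partition of $G-\{x,y\}$ belongs to $\mathcal P$.
   Context: A digraph has no loops and at most one arc in each direction between two vertices. $T_{r+1}^t$ is the blow-up of the transitive tournament $T_{r+1}$ in which each vertex is replaced by an independent set of size $t$ and each arc $ij$ by all arcs from the $i$-th set to the $j$-th set. For an $r$-partition $Q$ of a vertex set and a digraph $G$ on it, an arc is non-crossing if both endpoints lie in the same part; $Q$ is optimal for $G$ if it minimises the number of non-crossing arcs among all $r$-partitions of that vertex set. $\overrightarrow{e}(U,W)$ is the number of arcs from $U$ to $W$. $F_Q^*(n,T_{r+1}^t,\eta,\mu)$ is the set of labelled $T_{r+1}^t$-free digraphs $G$ on $[n]$ such that $Q=(V_1,\dots,V_r)$ is optimal for $G$, $G$ has at most $\eta n^2$ non-crossing arcs with respect to $Q$, (F2) for all distinct $i,j\in[r]$ and all $U_i\subseteq V_i$, $U_j\subseteq V_j$ with $|U_i|,|U_j|\ge\mu n$ we have $\overrightarrow{e}(U_i,U_j),\overrightarrow{e}(U_j,U_i)\ge\frac16|U_i||U_j|$, and (F3) $||V_i|-n/r|\le\mu n$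 for all $i$. *)

From Stdlib Require Import Reals.
From mathcomp Require Import all_boot.

Set Implicit Arguments.
Unset Strict Implicit.
Unset Printing Implicit Defensive.

(* A digraph on a finite vertex set T is a relation G : rel T (G u v = "arc u -> v");
   "at most one arc in each direction" is automatic; no loops is the [loopless] condition. *)
Definition loopless (T : finType) (G : rel T) : Prop := forall v, ~~ G v v.

(* An r-partition of T is an assignment of each vertex to one of the r parts
   (ordered parts V_0,...,V_{r-1}; empty parts allowed). *)

Definition noncrossing (T : finType) (r : nat) (G : rel T) (p : {ffun T -> 'I_r}) : nat :=
  #|[set e : T * T | G e.1 e.2 && (p e.1 == p e.2)]|.

Definition optimal (T : finType) (r : nat) (G : rel T) (p : {ffun T -> 'I_r}) : Prop :=
  forall q : {ffun T -> 'I_r}, (noncrossing G p <= noncrossing G q)%N.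

(* arc relation of T_{r+1}^t on vertex set 'I_(r+1) x 'I_t : all arcs from the i-th
   independent set to the j-th one whenever i < j *)
Definition blowupT (r t : nat) : rel ('I_r.+1 * 'I_t) := fun a b => (a.1 < b.1)%N.
Arguments blowupT : clear implicits.

Definition contains (S T : finType) (H : rel S) (G : rel T) : Prop :=
  exists f : S -> T, injective f /\ forall a b, H a b -> G (f a) (f b).

Definition Tfree (T : finType) (r t : nat) (G : rel T) : Prop := ~ contains (@blowupT r t) G.

Definition arcs (T : finType) (G : rel T) (U W : {set T}) : nat :=
  #|[set e : T * T | [&& e.1 \in U, e.2 \in W & G e.1 e.2]]|.

Definition part (T : finType) (r : nat) (p : {ffun T -> 'I_r}) (i : 'I_r) : {set T} :=
  [set v | p v == i].

Notation minus2 x y := {v | v \notin [set x; y]}.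
Definition del2 (T : finType) (G : rel T) (x y : T) : rel (minus2 x y) :=
  fun u v => G (val u) (val v).

Open Scope R_scope.

Definition Fstar (n r t : nat) (eta mu : R) (Q : {ffun 'I_n -> 'I_r}) (G : rel 'I_n) : Prop :=
  loopless G /\ Tfree r t G /\ optimal G Q /\
      INR (noncrossing G Q) <= eta * INR n ^ 2 /\
      (forall (i j : 'I_r) (Ui Uj : {set 'I_n}), i != j ->
         Ui \subset part Q i -> Uj \subset part Q j ->
         mu * INR n <= INR #|Ui| -> mu * INR n <= INR #|Uj| ->
         INR (arcs G Ui Uj) >= / 6 * INR #|Ui| * INR #|Uj| /\
         INR (arcs G Uj Ui) >= / 6 * INR #|Ui| * INR #|Uj|) /\
      (forall i : 'I_r, Rabs (INR #|part Q i| - INR n / INR r) <= mu * INR n).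
Arguments Fstar : clear implicits.
Arguments del2 {T} G x y.

(* Let p be optimal for G - {x, y}. It has at most as many non-crossing arcs as the restriction
   of Q, so at most eta n^2. By (F3) each part V_i of Q meets some part of p in a ~ mu n vertices,
   and by (F2) no part of p meets two parts of Q in that many vertices, for it would then carry
   at least a^2/3 > eta n^2 non-crossing arcs. Hence p agrees with a relabelling s of Q outside
   at most r^2 a vertices. Weighting each pair (p, s) by K to the number of agreements, the total
   weight is r^r (K + r - 1)^n, so at most r^r (1 + r/K)^n K^(r^2 a) partitions are that close
   to a relabelling of Q; writing mu = L^-12 and taking K ~ 4 r L^8, this is at most
   e^(n / L^8) = e^(mu^(2/3) n). *)

From Stdlib Require Import Reals Lra ZArith.
From mathcomp Require Import all_boot.

Set Implicit Arguments.
Unset Strict Implicit.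
Unset Printing Implicit Defensive.

Close Scope R_scope.

Lemma card_fibers (T J : finType) (A : {set T}) (g : T -> J) :
  #|A| = \sum_(j : J) #|[set v in A | g v == j]|.
Proof.
rewrite -sum1_card (partition_big g xpredT) //=.
by apply: eq_bigr => j _; rewrite -sum1_card; apply: eq_bigl => v; rewrite !inE.
Qed.

Section Relabelings.

Variables (T : finType) (r : nat) (q : {ffun T -> 'I_r}).

Definition relabel_dist (s : {ffun 'I_r -> 'I_r}) (p : {ffun T -> 'I_r}) :=
  #|[set v | p v != s (q v)]|.

Definition near_relabelings (m : nat) :=
  [set p : {ffun T -> 'I_r} | [exists s, relabel_dist s p <= m]].

Definition agreement_weight (K : nat) (s : {ffun 'I_r -> 'I_r}) (p : {ffun T -> 'I_r}) :=
  \prod_(v : T) (if p v == s (q v) then K else 1).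

Lemma agreement_weightE K s p :
  agreement_weight K s p = K ^ (#|T| - relabel_dist s p).
Proof.
rewrite /agreement_weight -big_mkcond /= prod_nat_const; congr (_ ^ _).
rewrite -(cardsC [set v | p v != s (q v)]) addKn.
by apply: eq_card => v; rewrite !inE negbK.
Qed.

Lemma sum_agreement_weight K s :
  \sum_(p : {ffun T -> 'I_r}) agreement_weight K s p = (K + r.-1) ^ #|T|.
Proof.
rewrite -(bigA_distr_bigA (fun v (j : 'I_r) => if j == s (q v) then K else 1)).
rewrite -prod_nat_const; apply: eq_bigr => v _.
rewrite (bigD1 (s (q v))) //= eqxx; congr (_ + _).
rewrite (eq_bigr (fun _ => 1)) => [|j /negbTE -> //].
by rewrite sum1_card cardC1 card_ord.
Qed.

Lemma card_near_relabelings m K : 0 < K ->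
  #|near_relabelings m| * K ^ #|T| <= r ^ r * (K + r.-1) ^ #|T| * K ^ m.
Proof.
move=> K_gt0; rewrite -sum_nat_const.
apply: (@leq_trans (\sum_(p in near_relabelings m)
                      (\sum_s agreement_weight K s p) * K ^ m)).
  apply: leq_sum => p; rewrite inE => /existsP [s dist_le].
  rewrite (bigD1 s) //= mulnDl; apply: leq_trans (leq_addr _ _).
  have dist_le_card : relabel_dist s p <= #|T| by exact: max_card.
  by rewrite agreement_weightE -expnD leq_pexp2l // -{1}(subnK dist_le_card) leq_add2l.
apply: (@leq_trans (\sum_p (\sum_s agreement_weight K s p) * K ^ m)).
  by rewrite [leqRHS](bigID [in near_relabelings m]) leq_addr.
rewrite -big_distrl exchange_big /= leq_mul2r; apply/orP; right.
rewrite (eq_bigr (fun _ => (K + r.-1) ^ #|T|)) => [|s _]; last exact: sum_agreement_weight.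
by rewrite sum_nat_const card_ffun !card_ord.
Qed.

Definition cell (p : {ffun T -> 'I_r}) (i j : 'I_r) :=
  [set v | (q v == i) && (p v == j)].

(* The large cells lie on the graph of an injective, hence bijective, map f : 'I_r -> 'I_r,
   so every cell off that graph is small. *)
Lemma close_to_relabeling p a :
  (forall i, exists j, a <= #|cell p i j|) ->
  (forall i i' j, i != i' -> a <= #|cell p i j| -> a <= #|cell p i' j| -> False) ->
  exists s, relabel_dist s p <= r * r * a.
Proof.
move=> row_large col_unique.
have [f large_f] := fin_all_exists row_large.
have f_inj : injective f.
  move=> i i' fii'; apply/eqP; apply/negPn/negP => ii'.
  by apply: (col_unique i i' (f i) ii' (large_f i)); rewrite fii'.
exists [ffun i => f i].
rewrite /relabel_dist (card_fibers _ (fun v => (q v, p v))).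
apply: (@leq_trans (\sum_(ij : 'I_r * 'I_r) a)); last first.
  by rewrite sum_nat_const card_prod !card_ord.
apply: leq_sum => [[i j]] _.
have [->|j_f] := eqVneq j (f i).
  rewrite (_ : [set _ in _ | _] = set0) ?cards0 //; apply/setP => v.
  rewrite !inE ffunE; apply/negP => /andP [mis /eqP [qi pj]].
  by rewrite qi pj eqxx in mis.
have sub_cell : [set v in [set v | p v != [ffun i => f i] (q v)] | (q v, p v) == (i, j)]
                  \subset cell p i j.
  by apply/subsetP => v; rewrite !inE => /andP [_ /eqP [-> ->]]; rewrite !eqxx.
apply: leq_trans (subset_leq_card sub_cell) _.
rewrite leqNgt; apply/negP => /ltnW large_ij.
have f_invj : f (invF f_inj j) = j by rewrite f_invF.
have ii' : i != invF f_inj j by apply: contra_neq j_f => ->.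
by apply: (col_unique i _ j ii' large_ij); rewrite -{2}f_invj.
Qed.

End Relabelings.

Section Deletion.

Variables (V : finType) (r : nat) (Q : {ffun V -> 'I_r}) (x y : V) (G : rel V).

Definition restrict2 : {ffun minus2 x y -> 'I_r} := [ffun u => Q (val u)].

Let val2 (e : minus2 x y * minus2 x y) : V * V := (val e.1, val e.2).

Let val2_inj : injective val2.
Proof. by move=> [a b] [c d] [/val_inj -> /val_inj ->]. Qed.

Lemma noncrossing_restrict2 : noncrossing (del2 G x y) restrict2 <= noncrossing G Q.
Proof.
rewrite /noncrossing -(card_imset _ val2_inj); apply: subset_leq_card.
by apply/subsetP => e /imsetP [[a b]]; rewrite !inE /del2 !ffunE => ? ->.
Qed.

Lemma cell_sub_part p i j : val @: cell restrict2 p i j \subset part Q i.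
Proof. by apply/subsetP => v /imsetP [u]; rewrite !inE ffunE => /andP [/eqP <- _] ->. Qed.

Lemma card_part_le p i : #|part Q i| <= \sum_j #|cell restrict2 p i j| + 2.
Proof.
have -> : \sum_j #|cell restrict2 p i j| = #|[set u | restrict2 u == i]|.
  by rewrite (card_fibers _ p); apply: eq_bigr => j _; apply: eq_card => u; rewrite !inE.
have part_sub : part Q i \subset val @: [set u | restrict2 u == i] :|: [set x; y].
  apply/subsetP => v; rewrite inE => /eqP Qv; rewrite in_setU.
  case: (boolP (v \in [set x; y])) => [_|v_xy]; first by rewrite orbT.
  by apply/orP; left; apply/imsetP; exists (exist _ v v_xy); rewrite // !inE ffunE Qv.
apply: leq_trans (subset_leq_card part_sub) _; apply: leq_trans (leq_card_setU _ _) _.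
by rewrite (card_imset _ val_inj) leq_add2l cards2; case: (x != y).
Qed.

Lemma arcs_cells_le_noncrossing p i i' j : i != i' ->
  arcs G (val @: cell restrict2 p i j) (val @: cell restrict2 p i' j)
  + arcs G (val @: cell restrict2 p i' j) (val @: cell restrict2 p i j)
  <= noncrossing (del2 G x y) p.
Proof.
move=> ii'; rewrite /arcs; set A := [set e | _]; set B := [set e | _].
have disjAB : A :&: B = set0.
  apply/setP => e; rewrite !inE; apply/negP.
  case/andP => /and3P [/imsetP [u u_i ->] _ _] /and3P [/imsetP [u' u'_i' u_u'] _ _].
  move: u_i u'_i'; rewrite !inE !ffunE -(val_inj u_u') => /andP [/eqP -> _] /andP [/eqP].
  by move/eqP: ii'.
rewrite -[#|A| + #|B|]subn0 -(cards0 (V * V)%type) -disjAB -cardsU.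
rewrite /noncrossing -(card_imset _ val2_inj); apply: subset_leq_card.
apply/subsetP => -[a b]; rewrite !inE /=.
case/orP => /and3P [/imsetP [u u_in ->] /imsetP [u' u'_in ->] Guu'];
  apply/imsetP; exists (u, u') => //; rewrite inE /del2 /= Guu' /=;
  move: u_in u'_in; rewrite !inE => /andP [_ /eqP ->] /andP [_ /eqP ->] //.
Qed.

End Deletion.

Open Scope R_scope.

Lemma INR_leq (a b : nat) : (a <= b)%N -> INR a <= INR b.
Proof. by move/leP; apply: le_INR. Qed.

Lemma INR_expn (a b : nat) : INR (a ^ b)%N = INR a ^ b.
Proof. by elim: b => [|b IH]; rewrite ?expn0 // expnS mult_INR IH. Qed.

Section OptimalPartitions.

Variables (n r t : nat) (eta mu : R) (Q : {ffun 'I_n -> 'I_r}) (x y : 'I_n).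
Variables (G : rel 'I_n) (p : {ffun minus2 x y -> 'I_r}) (a : nat).
Hypotheses (FG : Fstar n r t eta mu Q G) (p_opt : optimal (del2 G x y) p).

Local Notation cell := (cell (restrict2 Q x y) p).

Lemma no_column_with_two_large_cells : 0 <= mu -> (0 < n)%N -> eta < mu ^ 2 / 3 ->
  mu * INR n <= INR a ->
  forall i i' j, i != i' -> (a <= #|cell i j|)%N -> (a <= #|cell i' j|)%N -> False.
Proof.
move=> mu_ge0 n_gt0 eta_lt a_ge i i' j ii' large_i large_i'.
have [_ [_ [_ [nc_Q [F2 _]]]]] := FG.
pose Ui : {set 'I_n} := val @: cell i j; pose Ui' : {set 'I_n} := val @: cell i' j.
have [card_Ui card_Ui'] : (#|Ui| = #|cell i j| /\ #|Ui'| = #|cell i' j|)%N.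
  by split; apply: card_imset; apply: val_inj.
have Ui_ge : mu * INR n <= INR #|Ui| by apply: Rle_trans a_ge (INR_leq _); rewrite card_Ui.
have Ui'_ge : mu * INR n <= INR #|Ui'| by apply: Rle_trans a_ge (INR_leq _); rewrite card_Ui'.
have [arcs_ge arcs_ge'] :=
  F2 i i' Ui Ui' ii' (cell_sub_part Q p i j) (cell_sub_part Q p i' j) Ui_ge Ui'_ge.
have arcs_le : INR (arcs G Ui Ui') + INR (arcs G Ui' Ui) <= eta * INR n ^ 2.
  rewrite -plus_INR; apply: Rle_trans nc_Q; apply: INR_leq.
  apply: leq_trans (arcs_cells_le_noncrossing _ _ _ _ ii') _.
  exact: leq_trans (p_opt _) (noncrossing_restrict2 _ _ _ _).
have n_pos : 0 < INR n by apply: lt_0_INR; apply/ltP.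
have prod_ge : (mu * INR n) * (mu * INR n) <= INR #|Ui| * INR #|Ui'|.
  by apply: Rmult_le_compat; nra.
have : eta * INR n ^ 2 < mu ^ 2 / 3 * INR n ^ 2 by apply: Rmult_lt_compat_r; nra.
have -> : mu ^ 2 / 3 * INR n ^ 2 = mu * INR n * (mu * INR n) / 3 by field.
lra.
Qed.

Lemma large_cell_in_each_row : INR (r * a + 2) < INR n / INR r - mu * INR n ->
  forall i, exists j, (a <= #|cell i j|)%N.
Proof.
move=> part_large i; have [_ [_ [_ [_ [_ F3]]]]] := FG.
case: (boolP [exists j, a <= #|cell i j|]%N) => [/existsP //|/existsPn small_row].
have row_small : (\sum_j #|cell i j| <= r * a)%N.
  rewrite -[r in (_ <= r * a)%N]card_ord -sum_nat_const.
  by apply: leq_sum => j _; rewrite ltnW // ltnNge small_row.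
have part_le : INR #|part Q i| <= INR (r * a + 2).
  apply: INR_leq; apply: leq_trans (card_part_le Q p i) _.
  by rewrite leq_add2r.
have := Rle_abs (- (INR #|part Q i| - INR n / INR r)).
rewrite Rabs_Ropp; have := F3 i; lra.
Qed.

Lemma optimal_near_relabeling : 0 <= mu -> (0 < n)%N -> eta < mu ^ 2 / 3 ->
  mu * INR n <= INR a -> INR (r * a + 2) < INR n / INR r - mu * INR n ->
  p \in near_relabelings (restrict2 Q x y) (r * r * a).
Proof.
move=> mu_ge0 n_gt0 eta_lt a_ge part_large; rewrite inE; apply/existsP.
apply: close_to_relabeling; first exact: large_cell_in_each_row.
exact: no_column_with_two_large_cells.
Qed.

End OptimalPartitions.

Lemma exp_le a b : a <= b -> exp a <= exp b.
Proof. by case/Rle_lt_or_eq_dec => [/exp_increasing/Rlt_le //|->]; apply: Rle_refl. Qed.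

Lemma exp_pow z k : exp z ^ k = exp (INR k * z).
Proof.
elim: k => [|k IH]; first by rewrite Rmult_0_l exp_0.
by rewrite S_INR /= IH -exp_plus; congr exp; ring.
Qed.

Lemma pow_le_exp b z k : 0 <= b <= exp z -> b ^ k <= exp (INR k * z).
Proof. by move=> b_bounds; rewrite -exp_pow; apply: pow_incr. Qed.

Lemma add_pow_le_exp K c k : 0 < K -> 0 <= c -> (K + c) ^ k <= K ^ k * exp (INR k * c / K).
Proof.
move=> K_pos c_ge0.
have one_add : K + c <= K * exp (c / K).
  have := exp_ineq1_le (c / K); have -> : K + c = K * (1 + c / K) by field; lra.
  by move=> le1; apply: Rmult_le_compat_l => //; lra.
apply: Rle_trans (pow_incr _ _ k (conj _ one_add)) _; first lra.
by rewrite Rpow_mult_distr exp_pow /Rdiv Rmult_assoc; apply: Rle_refl.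
Qed.

Lemma card_near_relabelings_exp (T : finType) (r : nat) (q : {ffun T -> 'I_r}) m K :
  (0 < K)%N ->
  INR #|near_relabelings q m| <= INR r ^ r * exp (INR #|T| * INR r / INR K) * INR K ^ m.
Proof.
move=> K_gt0; have K_pos : 0 < INR K by apply: lt_0_INR; apply/ltP.
have := INR_leq (card_near_relabelings q m K_gt0); rewrite !mult_INR !INR_expn => card_le.
have KrT : INR (K + r.-1) ^ #|T| <= INR K ^ #|T| * exp (INR #|T| * INR r / INR K).
  apply: (Rle_trans _ _ _ _ (add_pow_le_exp #|T| K_pos (pos_INR r))).
  apply: pow_incr; rewrite plus_INR; split.
    by apply: Rplus_le_le_0_compat; apply: pos_INR.
  exact/Rplus_le_compat_l/INR_leq/leq_pred.
apply: (Rmult_le_reg_r (INR K ^ #|T|)); first exact: pow_lt.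
apply: (Rle_trans _ _ _ card_le).
apply: (Rle_trans _ (INR r ^ r * (INR K ^ #|T| * exp (INR #|T| * INR r / INR K)) * INR K ^ m)).
  apply: Rmult_le_compat_r; first by apply: pow_le; lra.
  by apply: Rmult_le_compat_l => //; apply: pow_le; apply: pos_INR.
by right; ring.
Qed.

Lemma nat_between z : 0 <= z -> exists a : nat, z < INR a <= z + 1.
Proof.
move=> z_ge0; have [up_gt up_le] := archimed z.
have up_ge0 : (0 <= up z)%Z by apply: le_IZR; lra.
by exists (Z.to_nat (up z)); rewrite INR_IZR_INZ Z2Nat.id //; lra.
Qed.

Lemma inverse_twelfth_root mu c : 0 < mu -> 0 < c -> mu < 1 / c ^ 12 ->
  exists L, c < L /\ mu = / L ^ 12 /\ Rpower mu (2 / 3) = / L ^ 8.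
Proof.
move=> mu_pos c_pos mu_lt.
pose L := Rpower mu (- (1 / 12)).
have L_pos : 0 < L by apply: exp_pos.
have L_pow k : L ^ k = Rpower mu (- (INR k / 12)).
  by rewrite -Rpower_pow // Rpower_mult; congr Rpower; field.
have L12 : L ^ 12 = / mu.
  by rewrite L_pow (_ : - (INR 12 / 12) = - 1) ?Rpower_Ropp ?Rpower_1 //=; field.
exists L; split; [|split].
- apply: Rnot_le_lt => L_le; have := pow_incr _ _ 12 (conj (Rlt_le _ _ L_pos) L_le).
  rewrite L12 => /(Rinv_le_contravar _ _ (Rinv_0_lt_compat _ mu_pos)).
  by rewrite Rinv_inv; move: mu_lt; rewrite /Rdiv Rmult_1_l; lra.
- by rewrite L12 Rinv_inv.
- by rewrite L_pow Rpower_Ropp Rinv_inv; congr Rpower; simpl; field.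
Qed.

Section Estimates.

Variables (r : nat) (L : R).
Hypotheses (r_ge2 : (2 <= r)%N) (L_gt : 3 * INR r ^ 2 < L).

Let r_R : 2 <= INR r.
Proof. exact: (INR_leq r_ge2). Qed.

Let L_gt12 : 12 < L.
Proof. nra. Qed.

Let L_pos : 0 < L.
Proof. lra. Qed.

Let L8_ge1 : 1 <= L ^ 8.
Proof. by apply: pow_R1_Rle; lra. Qed.

Let L12_split : / L ^ 12 = / L ^ 8 * / L ^ 4.
Proof. by rewrite -Rinv_mult -pow_add. Qed.

Let L4_large : 36 * INR r ^ 2 * L <= L ^ 4.
Proof. have : 3 * INR r ^ 2 * 12 * 12 <= L * L * L by nra. nra. Qed.

Lemma row_threshold (n a : nat) :
  INR a <= / L ^ 12 * INR n + 1 -> 2 * INR r * (INR r + 2) < INR n ->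
  INR (r * a + 2) < INR n / INR r - / L ^ 12 * INR n.
Proof.
move=> a_le n_large; set mu := / L ^ 12 in a_le *.
have mu_pos : 0 < mu by apply/Rinv_0_lt_compat/pow_lt.
have mu_L : mu * L <= 1.
  have L_le : L <= L ^ 12.
    have L11 := pow_R1_Rle L 11 ltac:(lra).
    by rewrite (_ : L ^ 12 = L * L ^ 11); [nra | ring].
  have : mu * L ^ 12 = 1 by rewrite /mu Rinv_l //; apply: pow_nonzero; lra.
  nra.
have mu_r : mu * (INR r ^ 2 + INR r) <= 1 / 2 by nra.
rewrite plus_INR mult_INR (_ : INR 2 = 2) //.
have -> : INR n / INR r - mu * INR n = (INR n - mu * INR n * INR r) / INR r by field; lra.
apply: (Rmult_lt_reg_r (INR r)); first lra.
rewrite /Rdiv Rmult_assoc Rinv_l ?Rmult_1_r; last lra.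
nra.
Qed.

Lemma ratio_le_quarter (s n K : nat) : (s <= n)%N -> 4 * INR r * L ^ 8 < INR K ->
  INR s * INR r / INR K <= / L ^ 8 * INR n / 4.
Proof.
move=> /INR_leq s_le K_gt; set e := / L ^ 8 * INR n.
have e_ge0 : 0 <= e.
  by apply: Rmult_le_pos; [apply/Rlt_le/Rinv_0_lt_compat/pow_lt | apply: pos_INR].
have eL : e * L ^ 8 = INR n by rewrite /e; field; lra.
apply: (Rmult_le_reg_r (INR K)); first nra.
rewrite /Rdiv Rmult_assoc Rinv_l ?Rmult_1_r; last nra.
apply: Rle_trans (Rmult_le_compat_l _ _ _ _ (Rlt_le _ _ K_gt)); last lra.
rewrite (_ : e * / 4 * (4 * INR r * L ^ 8) = INR r * (e * L ^ 8)); last by field.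
by rewrite eL Rmult_comm; apply: Rmult_le_compat_l; lra.
Qed.

Lemma K_pow_le_exp (n a K : nat) :
  INR a <= / L ^ 12 * INR n + 1 -> INR K <= 4 * INR r * L ^ 8 + 1 ->
  INR K ^ (r * r * a) <= exp (/ L ^ 8 * INR n / 4 + 9 * INR r ^ 2 * L).
Proof.
move=> a_le K_le; set e := / L ^ 8 * INR n.
have K_le_exp : INR K <= exp (INR 9 * L).
  rewrite -exp_pow; apply: Rle_trans (pow_incr L (exp L) 9 _); last first.
    by split; [lra | have := exp_ineq1_le L; lra].
  have L_ge : 4 * INR r + 1 <= L by nra.
  by rewrite (_ : L ^ 9 = L * L ^ 8); [nra | ring].
apply: Rle_trans (pow_le_exp _ (conj (pos_INR K) K_le_exp)) _.
apply: exp_le; rewrite !mult_INR (_ : INR 9 = 9); last by rewrite /=; ring.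
have : / L ^ 12 * INR n * (36 * INR r ^ 2 * L) <= / L ^ 12 * INR n * L ^ 4.
  apply: Rmult_le_compat_l => //.
  by apply: Rmult_le_pos; [apply/Rlt_le/Rinv_0_lt_compat/pow_lt | apply: pos_INR].
rewrite L12_split (_ : / L ^ 8 * / L ^ 4 * INR n * L ^ 4 = e); last first.
  by rewrite /e; field; lra.
have coef_ge0 : 0 <= INR r * INR r * (9 * L) by apply: Rmult_le_pos; nra.
have := Rmult_le_compat_l _ _ _ coef_ge0 a_le; rewrite L12_split.
lra.
Qed.

Lemma relabel_count_estimate (s n a K : nat) :
  (s <= n)%N -> INR a <= / L ^ 12 * INR n + 1 ->
  4 * INR r * L ^ 8 < INR K <= 4 * INR r * L ^ 8 + 1 ->
  2 * L ^ 8 * (INR r ^ r + 9 * INR r ^ 2 * L) <= INR n ->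
  INR r ^ r * exp (INR s * INR r / INR K) * INR K ^ (r * r * a) <= exp (/ L ^ 8 * INR n).
Proof.
move=> s_le a_le [K_gt K_le] n_large; set e := / L ^ 8 * INR n.
have consts_le : INR r ^ r + 9 * INR r ^ 2 * L <= e / 2.
  apply: (Rmult_le_reg_r (2 * L ^ 8)); first lra.
  have -> : e / 2 * (2 * L ^ 8) = INR n by rewrite /e; field; lra.
  lra.
have r_pow_le : INR r ^ r <= exp (INR r ^ r) by have := exp_ineq1_le (INR r ^ r); lra.
apply: (Rle_trans _ (exp (INR r ^ r) * exp (e / 4) * exp (e / 4 + 9 * INR r ^ 2 * L))).
  apply: Rmult_le_compat; [| apply: pow_le; apply: pos_INR | | exact: K_pow_le_exp].
    by apply: Rmult_le_pos; [apply: pow_le; apply: pos_INR | apply/Rlt_le/exp_pos].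
  apply: Rmult_le_compat => //; last exact/exp_le/ratio_le_quarter.
    by apply: pow_le; apply: pos_INR.
  exact/Rlt_le/exp_pos.
rewrite -!exp_plus; apply: exp_le; lra.
Qed.

(* K is about r / mu^(2/3): large enough that (1 + r/K)^n is only e^(mu^(2/3) n / 4), small
   enough that K^(r^2 a) with a ~ mu n is e^(O(mu^(2/3) n)) as well. *)
Lemma card_near_relabelings_small (T : finType) (q : {ffun T -> 'I_r}) (n a : nat) :
  (#|T| <= n)%N -> INR a <= / L ^ 12 * INR n + 1 ->
  2 * L ^ 8 * (INR r ^ r + 9 * INR r ^ 2 * L) <= INR n ->
  INR #|near_relabelings q (r * r * a)| <= exp (/ L ^ 8 * INR n).
Proof.
move=> T_le a_le n_large.
have K_base : 0 <= 4 * INR r * L ^ 8 by have := pow_lt _ 8 L_pos; nra.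
have [K [K_gt K_le]] := nat_between K_base.
have K_gt0 : (0 < K)%N by apply/ltP/INR_lt; rewrite /=; nra.
apply: Rle_trans (card_near_relabelings_exp _ _ K_gt0) _.
exact: relabel_count_estimate.
Qed.

Lemma eventually_large : exists N : nat, forall n, (N <= n)%N ->
  [/\ (0 < n)%N, 2 * INR r * (INR r + 2) < INR n
    & 2 * L ^ 8 * (INR r ^ r + 9 * INR r ^ 2 * L) <= INR n].
Proof.
have count_ge0 : 0 <= 2 * L ^ 8 * (INR r ^ r + 9 * INR r ^ 2 * L).
  have := pow_lt _ 8 L_pos; have := pow_le (INR r) r (pos_INR r).
  have : 0 <= INR r ^ 2 * L by apply: Rmult_le_pos; [apply: pow_le|]; lra.
  nra.
have [N N_gt] :=
  INR_unbounded (2 * L ^ 8 * (INR r ^ r + 9 * INR r ^ 2 * L) + 2 * INR r * (INR r + 2)).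
exists N => n /INR_leq N_le; split; [apply/ltP/INR_lt; rewrite /= | |]; nra.
Qed.

End Estimates.

Theorem lemma5p4 (r t : nat) (mu eta : R) :
  (2 <= r)%N -> (1 <= t)%N ->
  0 < mu < 1 / (3 * INR r ^ 2) ^ 12 ->
  0 < eta < mu ^ 2 / 3 ->
  exists N : nat, forall n : nat, (N <= n)%N ->
  forall (Q : {ffun 'I_n -> 'I_r}) (x y : 'I_n),
    x != y -> nat_of_ord (Q x) = 0%N -> nat_of_ord (Q y) = 0%N ->
    exists P : {set {ffun minus2 x y -> 'I_r}},
      INR #|P| <= exp (Rpower mu (2 / 3) * INR n) /\
      forall G : rel 'I_n, Fstar n r t eta mu Q G ->
        forall p : {ffun minus2 x y -> 'I_r}, optimal (del2 G x y) p -> p \in P.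
Proof.
move=> r_ge2 _ [mu_pos mu_lt] [_ eta_lt].
have r_pos : 0 < INR r by apply: lt_0_INR; apply/ltP; exact: ltnW.
have [L [L_gt [mu_def ->]]] :=
  inverse_twelfth_root mu_pos (Rmult_lt_0_compat 3 _ ltac:(lra) (pow_lt _ 2 r_pos)) mu_lt.
subst mu.
have [N N_large] := eventually_large r_ge2 L_gt.
exists N => n /N_large [n_pos n_large_row n_large_count] Q x y _ _ _.
have [a [a_gt a_le]] := nat_between (Rmult_le_pos _ _ (Rlt_le _ _ mu_pos) (pos_INR n)).
exists (near_relabelings (restrict2 Q x y) (r * r * a)); split.
- apply: card_near_relabelings_small => //.
  by rewrite -[leqRHS]card_ord; apply: (leq_card _ val_inj).
- move=> G FG p p_opt.
  apply: optimal_near_relabeling FG p_opt (Rlt_le _ _ mu_pos) n_pos eta_lt (Rlt_le _ _ a_gt) _.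
  exact: row_threshold.
Qed.
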